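(* Let $k\geqslant 2$ be an integer, and in $B_5$ let $\delta_3=\sigma_2\sigma_1$, $\tilde\delta_3=\sigma_1\sigma_2$, $\Delta_3=\sigma_2\sigma_1\sigma_2$ and \[\beta'_k=(\sigma_1\sigma_3)^{2k-2}(\sigma_3\sigma_4\Delta_3)(\Delta_3\sigma_4)\big[(\delta_3\sigma_4)(\tilde\delta_3\sigma_4)\big]^{k-1}(\delta_3\sigma_4\sigma_3\sigma_4).\] Then $\beta'_k$ is not periodic, i.e. there are no nonzero integers $m,l$ with $(\beta'_k)^m=\Delta^l$.
   Context: $B_5$ is the 5-strand braid group with standard generators $\sigma_1,\dots,\sigma_4$, and $\Delta=(\sigma_1\sigma_2\sigma_3\sigma_4)(\sigma_1\sigma_2\sigma_3)(\sigma_1\sigma_2)\sigma_1$. *)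

(* The braid group B_5 is modelled by its standard Artin
   presentation: braid words (lists of signed generators sigma_1..sigma_4)
   modulo the congruence generated by free cancellation and the braid
   relations. *)
From Stdlib Require Import List ZArith.
Import ListNotations.

Inductive gen : Set := s1 | s2 | s3 | s4.

(* a letter: generator together with an exponent sign (true = +1, false = -1) *)
Definition letter : Set := (gen * bool)%type.
Definition word : Set := list letter.

Definition idx (g : gen) : nat :=
  match g with s1 => 1 | s2 => 2 | s3 => 3 | s4 => 4 end.

Definition far (g h : gen) : Prop := idx g + 2 <= idx h \/ idx h + 2 <= idx g.
Definition adj (g h : gen) : Prop := idx h = S (idx g) \/ idx g = S (idx h).

Definition sg (g : gen) : word := [(g, true)].

Inductive braid_eq : word -> word -> Prop :=
| be_refl : forall u, braid_eq u u
| be_sym : forall u v, braid_eq u v -> braid_eq v u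
| be_trans : forall u v w, braid_eq u v -> braid_eq v w -> braid_eq u w
| be_cat : forall u u' v v', braid_eq u u' -> braid_eq v v' ->
    braid_eq (u ++ v) (u' ++ v')
| be_free : forall g b, braid_eq [(g, b); (g, negb b)] []
| be_comm : forall g h, far g h -> braid_eq (sg g ++ sg h) (sg h ++ sg g)
| be_braid : forall g h, adj g h ->
    braid_eq (sg g ++ sg h ++ sg g) (sg h ++ sg g ++ sg h).

Definition winv (w : word) : word :=
  rev (map (fun x => (fst x, negb (snd x))) w).

Fixpoint wrep (n : nat) (w : word) : word :=
  match n with O => [] | S n' => w ++ wrep n' w end.

Definition wpow (w : word) (m : Z) : word :=
  match m with
  | Z0 => []
  | Zpos p => wrep (Pos.to_nat p) w
  | Zneg p => wrep (Pos.to_nat p) (winv w)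
  end.

Definition Delta : word :=
  sg s1 ++ sg s2 ++ sg s3 ++ sg s4 ++ sg s1 ++ sg s2 ++ sg s3 ++
  sg s1 ++ sg s2 ++ sg s1.

Definition delta3 : word := sg s2 ++ sg s1.
Definition delta3t : word := sg s1 ++ sg s2.
Definition Delta3 : word := sg s2 ++ sg s1 ++ sg s2.

Definition beta' (k : nat) : word :=
  wrep (2 * k - 2) (sg s1 ++ sg s3)
  ++ (sg s3 ++ sg s4 ++ Delta3)
  ++ (Delta3 ++ sg s4)
  ++ wrep (k - 1) ((delta3 ++ sg s4) ++ (delta3t ++ sg s4))
  ++ (delta3 ++ sg s4 ++ sg s3 ++ sg s4).

(* Label the strands 1..5 and follow a braid word crossing by crossing: each
   letter sigma_i^(+-1) swaps the labels at positions i, i+1 and adds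
   +-h(a, b) to a running total, where a, b are the labels crossing.  For
   symmetric h this is invariant under the braid relations.  The braid
   beta'_k permutes the labels by the 5-cycle f = (1 4 3 5 2); for any h
   invariant under f, beta'_k^m then adds m times the total of beta'_k, while
   Delta^l adds l times the total of Delta.  Taking h = 1 (exponent sum:
   10k + 4 against 10) and h = the edge indicator of the pentagon 1-4-3-5-2
   (8k + 2 against 5) gives two proportionalities m c = l H which are
   incompatible for m <> 0. *)
From Stdlib Require Import List ZArith Lia Bool.
Import ListNotations.

Record state := mkState { lab1 : nat; lab2 : nat; lab3 : nat; lab4 : nat; lab5 : nat;
                          acc : Z }.

Section Run.
Variable h : nat -> nat -> Z.

Definition signed (b : bool) (v : Z) : Z := if b then v else (- v)%Z.

Definition step (x : letter) (s : state) : state :=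
  let '(g, b) := x in
  let '(mkState a1 a2 a3 a4 a5 z) := s in
  match g with
  | s1 => mkState a2 a1 a3 a4 a5 (z + signed b (h a1 a2))
  | s2 => mkState a1 a3 a2 a4 a5 (z + signed b (h a2 a3))
  | s3 => mkState a1 a2 a4 a3 a5 (z + signed b (h a3 a4))
  | s4 => mkState a1 a2 a3 a5 a4 (z + signed b (h a4 a5))
  end.

Fixpoint run (w : word) (s : state) : state :=
  match w with [] => s | x :: w' => run w' (step x s) end.

Lemma run_app u v s : run (u ++ v) s = run v (run u s).
Proof. revert s; induction u; simpl; auto. Qed.

Definition addacc (d : Z) (s : state) : state :=
  mkState (lab1 s) (lab2 s) (lab3 s) (lab4 s) (lab5 s) (acc s + d).

Lemma addacc0 s : addacc 0 s = s.
Proof. destruct s; unfold addacc; simpl; f_equal; ring. Qed.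

Lemma addacc_addacc d e s : addacc d (addacc e s) = addacc (e + d) s.
Proof. destruct s; unfold addacc; simpl; f_equal; ring. Qed.

Lemma run_addacc w d s : run w (addacc d s) = addacc d (run w s).
Proof.
  revert s; induction w as [|[[] b] w IH]; intros [a1 a2 a3 a4 a5 z]; simpl;
    auto; rewrite <- IH; unfold addacc; simpl; f_equal; f_equal; ring.
Qed.

Lemma run_wrep_addacc w d n s : run w s = addacc d s ->
  run (wrep n w) s = addacc (Z.of_nat n * d) s.
Proof.
  intros E; induction n as [|n IH]; cbn [wrep].
  - rewrite Z.mul_0_l, addacc0; reflexivity.
  - rewrite run_app, E, run_addacc, IH, addacc_addacc; f_equal; lia.
Qed.

Hypothesis h_sym : forall x y, h x y = h y x.

Lemma run_braid_eq u v : braid_eq u v -> forall s, run u s = run v s.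
Proof.
  induction 1 as [| | | | g b | g g' Hfar | g g' Hadj]; intros s; auto.
  - rewrite IHbraid_eq1; apply IHbraid_eq2.
  - rewrite !run_app, IHbraid_eq1, IHbraid_eq2; reflexivity.
  - destruct g, b, s as [a1 a2 a3 a4 a5 z]; simpl; f_equal;
      rewrite h_sym; ring.
  - unfold far in Hfar; destruct g, g'; simpl in Hfar; try lia;
      destruct s; simpl; f_equal; ring.
  - unfold adj in Hadj; destruct g, g'; simpl in Hadj; try lia;
      destruct s; simpl; f_equal; ring.
Qed.

Lemma run_winv_l w s : run (winv w) (run w s) = s.
Proof.
  revert s; induction w as [|[g b] w IH]; intros s; auto.
  unfold winv; cbn [map rev]; rewrite run_app; cbn [run fst snd]; fold (winv w).
  rewrite IH.
  destruct g, b, s as [a1 a2 a3 a4 a5 z]; simpl; f_equal;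
    rewrite ?(h_sym a2 a1), ?(h_sym a3 a2), ?(h_sym a4 a3), ?(h_sym a5 a4); ring.
Qed.

Section PowerShift.
Variables (w : word) (c : Z) (P : state -> Prop).
Hypothesis P_run : forall s, P s -> P (run w s).
Hypothesis P_preimage : forall s, P s -> exists t, P t /\ run w t = s.
Hypothesis acc_run : forall s, P s -> acc (run w s) = (acc s + c)%Z.

Lemma acc_run_wrep (v : word) (d : Z) :
  (forall s, P s -> P (run v s) /\ acc (run v s) = (acc s + d)%Z) ->
  forall n s, P s -> P (run (wrep n v) s) /\
    acc (run (wrep n v) s) = (acc s + Z.of_nat n * d)%Z.
Proof.
  intros Hv n; induction n as [|n IH]; intros s Ps; cbn [wrep run].
  - split; [exact Ps | lia].
  - rewrite run_app; destruct (Hv s Ps) as [Pv Av].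
    destruct (IH _ Pv) as [Pn An]; split; [exact Pn | lia].
Qed.

Lemma winv_step s : P s -> P (run (winv w) s) /\ acc (run (winv w) s) = (acc s - c)%Z.
Proof.
  intros Ps; destruct (P_preimage s Ps) as [t [Pt <-]].
  rewrite run_winv_l; split; [exact Pt | rewrite acc_run by exact Pt; lia].
Qed.

Lemma acc_run_wpow m s : P s -> acc (run (wpow w m) s) = (acc s + m * c)%Z.
Proof.
  intros Ps; destruct m as [|p|p]; cbn [wpow].
  - simpl; lia.
  - destruct (acc_run_wrep w c (fun t Pt => conj (P_run t Pt) (acc_run t Pt))
      (Pos.to_nat p) s Ps) as [_ A].
    rewrite A, positive_nat_Z; reflexivity.
  - assert (Hinv : forall t, P t ->
      P (run (winv w) t) /\ acc (run (winv w) t) = (acc t + - c)%Z).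
    { intros t Pt; destruct (winv_step t Pt) as [P' A]; split; [exact P' | lia]. }
    destruct (acc_run_wrep (winv w) (- c) Hinv (Pos.to_nat p) s Ps) as [_ A].
    rewrite A, positive_nat_Z; lia.
Qed.
End PowerShift.

Definition relab (f : nat -> nat) (s : state) : state :=
  mkState (f (lab1 s)) (f (lab2 s)) (f (lab3 s)) (f (lab4 s)) (f (lab5 s)) (acc s).

Lemma run_relab f : (forall x y, h (f x) (f y) = h x y) ->
  forall w s, run w (relab f s) = relab f (run w s).
Proof.
  intros hf w; induction w as [|[g b] w IH]; intros s; auto.
  simpl; rewrite <- IH; f_equal; destruct g, s; simpl; rewrite hf; reflexivity.
Qed.

Definition s0 : state := mkState 1 2 3 4 5 0.
Definition s0rev : state := mkState 5 4 3 2 1 0.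

Lemma acc_run_wpow_reversing w H :
  run w s0 = addacc H s0rev -> run w s0rev = addacc H s0 ->
  forall l, acc (run (wpow w l) s0) = (l * H)%Z.
Proof.
  intros E0 E1 l.
  set (P := fun s => exists a, s = addacc a s0 \/ s = addacc a s0rev).
  rewrite (acc_run_wpow w H P); [reflexivity | | | | exists 0%Z; left; reflexivity].
  - intros s [a [-> | ->]]; exists (H + a)%Z;
      rewrite run_addacc, ?E0, ?E1, addacc_addacc; auto.
  - intros s [a [-> | ->]].
    + exists (addacc (a - H) s0rev); split; [exists (a - H)%Z; auto |].
      rewrite run_addacc, E1, addacc_addacc; f_equal; ring.
    + exists (addacc (a - H) s0); split; [exists (a - H)%Z; auto |].
      rewrite run_addacc, E0, addacc_addacc; f_equal; ring.
  - intros s [a [-> | ->]]; rewrite run_addacc, ?E0, ?E1; simpl; ring.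
Qed.

(* The invariant set consists of the states on which [w] acts as on [s0]. *)
Lemma acc_run_wpow_relab w c f g :
  (forall x, g (f x) = x) -> (forall x, f (g x) = x) ->
  (forall x y, h (f x) (f y) = h x y) ->
  run w s0 = addacc c (relab f s0) ->
  forall m, acc (run (wpow w m) s0) = (m * c)%Z.
Proof.
  intros gf fg hf E0 m.
  assert (hg : forall x y, h (g x) (g y) = h x y)
    by (intros x y; rewrite <- hf, !fg; reflexivity).
  set (P := fun s => run w s = addacc c (relab f s)).
  rewrite (acc_run_wpow w c P); [reflexivity | | | | exact E0].
  - intros s Ps; unfold P in *.
    rewrite Ps, run_addacc, run_relab, Ps by exact hf; reflexivity.
  - intros s Ps; unfold P in *; exists (relab g (addacc (- c) s)).
    assert (Et : run w (relab g (addacc (- c) s)) = s).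
    { rewrite run_relab, run_addacc, Ps, addacc_addacc by exact hg.
      destruct s; unfold relab, addacc; simpl; rewrite !gf; f_equal; ring. }
    split; [unfold P; rewrite Et | exact Et].
    destruct s; unfold relab, addacc; simpl; rewrite !fg; f_equal; ring.
  - intros s Ps; unfold P in *; rewrite Ps; reflexivity.
Qed.
End Run.

Definition beta_head : word := sg s1 ++ sg s3.
Definition beta_mid : word := (sg s3 ++ sg s4 ++ Delta3) ++ (Delta3 ++ sg s4).
Definition beta_loop : word := (delta3 ++ sg s4) ++ (delta3t ++ sg s4).
Definition beta_tail : word := delta3 ++ sg s4 ++ sg s3 ++ sg s4.

Lemma wrep_double n (w : word) : wrep (2 * n) w = wrep n (w ++ w).
Proof.
  induction n as [|n IH]; auto.
  replace (2 * S n) with (S (S (2 * n))) by lia; cbn [wrep].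
  rewrite IH, app_assoc; reflexivity.
Qed.

Lemma beta'_SS j : beta' (S (S j)) =
  wrep (S j) (beta_head ++ beta_head) ++ beta_mid ++ wrep (S j) beta_loop ++ beta_tail.
Proof.
  change (beta' (S (S j))) with (wrep (2 * S (S j) - 2) beta_head
    ++ (sg s3 ++ sg s4 ++ Delta3) ++ (Delta3 ++ sg s4)
    ++ wrep (S (S j) - 1) beta_loop ++ beta_tail).
  replace (2 * S (S j) - 2) with (2 * S j) by lia.
  replace (S (S j) - 1) with (S j) by lia.
  rewrite wrep_double; unfold beta_mid; rewrite <- app_assoc; reflexivity.
Qed.

Lemma run_beta'_SS h j dhead dloop :
  run h (beta_head ++ beta_head) s0 = addacc dhead s0 ->
  run h beta_loop (run h beta_mid s0) = addacc dloop (run h beta_mid s0) ->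
  run h (beta' (S (S j))) s0 =
  addacc (Z.of_nat (S j) * (dhead + dloop))
    (run h beta_tail (run h beta_mid s0)).
Proof.
  intros Ehead Eloop.
  rewrite beta'_SS, !run_app, (run_wrep_addacc _ _ _ _ _ Ehead), !run_addacc.
  rewrite (run_wrep_addacc _ _ _ _ _ Eloop), !run_addacc, addacc_addacc.
  f_equal; ring.
Qed.

(* The permutation induced by beta'_k: the 5-cycle (1 4 3 5 2). *)
Definition fperm (x : nat) : nat :=
  match x with 1 => 4 | 2 => 1 | 3 => 5 | 4 => 3 | 5 => 2 | _ => x end.
Definition gperm (x : nat) : nat :=
  match x with 4 => 1 | 1 => 2 | 5 => 3 | 3 => 4 | 2 => 5 | _ => x end.

Lemma gperm_fperm x : gperm (fperm x) = x.
Proof. do 6 (destruct x as [|x]; [reflexivity|]); reflexivity. Qed.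

Lemma fperm_gperm x : fperm (gperm x) = x.
Proof. do 6 (destruct x as [|x]; [reflexivity|]); reflexivity. Qed.

Lemma fperm_inj x y : fperm x = fperm y -> x = y.
Proof. intros E; rewrite <- (gperm_fperm x), E, gperm_fperm; reflexivity. Qed.

Definition exponent_weight (x y : nat) : Z := 1.

Definition pentagon_weight (x y : nat) : Z :=
  if (fperm x =? y) || (fperm y =? x) then 1 else 0.

Lemma pentagon_weight_sym x y : pentagon_weight x y = pentagon_weight y x.
Proof. unfold pentagon_weight; rewrite orb_comm; reflexivity. Qed.

Lemma pentagon_weight_fperm x y :
  pentagon_weight (fperm x) (fperm y) = pentagon_weight x y.
Proof.
  unfold pentagon_weight.
  destruct (Nat.eqb_spec (fperm (fperm x)) (fperm y)) as [E | N1],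
           (Nat.eqb_spec (fperm x) y) as [E' | N1'];
    try (apply fperm_inj in E; contradiction);
    try (subst; contradiction); simpl;
  destruct (Nat.eqb_spec (fperm (fperm y)) (fperm x)) as [F | N2],
           (Nat.eqb_spec (fperm y) x) as [F' | N2'];
    try (apply fperm_inj in F; contradiction);
    try (subst; contradiction); reflexivity.
Qed.

Lemma acc_beta'_pow_exponent j m :
  acc (run exponent_weight (wpow (beta' (S (S j))) m) s0) =
  (m * (10 * Z.of_nat j + 24))%Z.
Proof.
  apply (acc_run_wpow_relab exponent_weight (fun _ _ => eq_refl) _ _ fperm gperm);
    auto using gperm_fperm, fperm_gperm.
  rewrite (run_beta'_SS _ j 4 6) by (vm_compute; reflexivity).
  replace (run exponent_weight beta_tail (run exponent_weight beta_mid s0))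
    with (addacc 14 (relab fperm s0)) by (vm_compute; reflexivity).
  rewrite addacc_addacc; f_equal; lia.
Qed.

Lemma acc_beta'_pow_pentagon j m :
  acc (run pentagon_weight (wpow (beta' (S (S j))) m) s0) =
  (m * (8 * Z.of_nat j + 18))%Z.
Proof.
  apply (acc_run_wpow_relab _ pentagon_weight_sym _ _ fperm gperm);
    auto using gperm_fperm, fperm_gperm, pentagon_weight_fperm.
  rewrite (run_beta'_SS _ j 4 4) by (vm_compute; reflexivity).
  replace (run pentagon_weight beta_tail (run pentagon_weight beta_mid s0))
    with (addacc 10 (relab fperm s0)) by (vm_compute; reflexivity).
  rewrite addacc_addacc; f_equal; lia.
Qed.

Lemma acc_Delta_pow_exponent l :
  acc (run exponent_weight (wpow Delta l) s0) = (l * 10)%Z.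
Proof.
  apply (acc_run_wpow_reversing exponent_weight (fun _ _ => eq_refl)); vm_compute; reflexivity.
Qed.

Lemma acc_Delta_pow_pentagon l :
  acc (run pentagon_weight (wpow Delta l) s0) = (l * 5)%Z.
Proof.
  apply (acc_run_wpow_reversing _ pentagon_weight_sym); vm_compute; reflexivity.
Qed.

Theorem mainTheorem6 (k : nat) (hk : 2 <= k) :
  ~ (exists m l : Z, m <> 0%Z /\ l <> 0%Z /\
       braid_eq (wpow (beta' k) m) (wpow Delta l)).
Proof.
  intros [m [l [Hm [_ HB]]]].
  destruct k as [|[|j]]; [lia | lia |].
  pose proof (f_equal acc (run_braid_eq exponent_weight (fun _ _ => eq_refl) _ _ HB s0)) as Eexp.
  pose proof (f_equal acc (run_braid_eq _ pentagon_weight_sym _ _ HB s0)) as Epent.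
  rewrite acc_beta'_pow_exponent, acc_Delta_pow_exponent in Eexp.
  rewrite acc_beta'_pow_pentagon, acc_Delta_pow_pentagon in Epent.
  assert (Hzero : (m * (6 * Z.of_nat j + 12))%Z = 0%Z) by lia.
  apply Z.mul_eq_0 in Hzero; lia.
Qed.
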